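(* Let $\Lambda$ be a set of pairwise compatible libraries, $L$ a library compatible with all of them and with $L\notin\Lambda$, and $I$ an implementation of $L$ that is well defined for $L$ using $\Lambda$. If $I$ is locally sound, then $I$ is a sound implementation of $L$ using $\Lambda$: for every concurrent program $\vec p$ whose method calls are all to methods of libraries in $\Lambda\uplus\{L\}$ and such that $\mathsf{loc}(I)\cap\mathsf{loc}(\vec p)=\emptyset$, we have $\mathsf{outcome}_\Lambda(\langle\!\langle\vec p\rangle\!\rangle_I)\subseteq\mathsf{outcome}_{\Lambda\uplus\{L\}}(\vec p)$.
   Context: Fix a set $\mathsf{Val}$ of values, a subset $\mathsf{Loc}\subseteq\mathsf{Val}$ of locations, a set $\mathsf{Method}$ of methods, a finite set of threads $\mathsf{Tid}=\{1,\dots,T\}$, and $\mathsf{EventId}=\mathbb N$. Programs. Sequential programs are given by the grammar $p::= v \mid m(v_1,\dots,v_k)\mid \mathtt{let}\ p\ \mathsf f\mid \mathtt{loop}\ p\mid \mathtt{break}_k\ v$, where $v,v_i\in\mathsf{Val}$, $m\in\mathsf{Method}$, $\mathsf f:\mathsf{Val}\to\mathsf{SeqProg}$, and $k\in\mathbb N^{+}$. A concurrent program is a tuple $\vec p=\langle p_1,\dots,p_T\rangle$ of sequential programs, $p_t$ run by thread $t$. Events and plain executions. Labels are $\mathsf{Lab}=\mathsf{Method}\times\mathsf{Val}^*\times\mathsf{Val}$ (method, inputs, output); events are $\mathsf{Event}=\mathsf{Tid}\times\mathsf{EventId}\times\mathsf{Lab}$; for $e=\langle t,\iota,l\rangle$,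 $\mathrm{thread}(e)=t$. A plain execution is a pair $\langle E,po\rangle$ with $E\subseteq\mathsf{Event}$, $po\subseteq E\times E$, $po=\bigcup_{t}po|_t$, where $po|_t$ (restriction to events of thread $t$) is a strict total order on the events of $t$. Write $\emptyset_G=\langle\emptyset,\emptyset\rangle$ and $\{e\}_G=\langle\{e\},\emptyset\rangle$. For $G_i=\langle E_i,po_i\rangle$ with $E_1\cap E_2=\emptyset$: $G_1;G_2=\langle E_1\cup E_2,\,po_1\cup po_2\cup(E_1\times E_2)\rangle$ and $G_1\parallel G_2=\langle E_1\cup E_2,\,po_1\cup po_2\rangle$. Plain semantics. $[\![p]\!]_t$ is a set of pairs $\langle\langle v,k\rangle,G\rangle$ (output value $v$, break number $k\in\mathbb N$, plain execution $G$): $[\![v]\!]_t=\{\langle\langle v,0\rangle,\emptyset_G\rangle\}$; $[\![\mathtt{break}_k\,v]\!]_t=\{\langle\langle v,k\rangle,\emptyset_G\rangle\}$; $[\![m(\vec v)]\!]_t=\{\langle\langle v',0\rangle,\{\langle t,\iota,\langle m,\vec v,v'\rangle\rangle\}_G\rangle : v'\in\mathsf{Val},\iota\in\mathsf{EventId}\}$; $[\![\mathtt{let}\ p\ \mathsf f]\!]_t=\{\langle r,G_1;G_2\rangle:\langle\langle v,0\rangle,G_1\rangle\in[\![p]\!]_t,\ \langle r,G_2\rangle\in[\![\mathsf f\,v]\!]_t\}\cup\{\langle\langle v,k\rangle,G_1\rangle\in[\![p]\!]_t: k\neq0\}$; $[\![\mathtt{loop}\ p]\!]_t=\bigcup_{j\in\mathbb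 N}\{\langle\langle v,k\rangle,G_0;\dots;G_j\rangle : (\forall i<j.\ \langle\langle\_,0\rangle,G_i\rangle\in[\![p]\!]_t)\wedge\langle\langle v,k+1\rangle,G_j\rangle\in[\![p]\!]_t\}$ (compositions taken only when event sets are disjoint). For concurrent programs, $[\![\langle p_1,\dots,p_T\rangle]\!]=\{\langle\langle v_1,\dots,v_T\rangle,\parallel_{t}G_t\rangle:\forall t.\ \langle\langle v_t,0\rangle,G_t\rangle\in[\![p_t]\!]_t\}$. Stamps and executions. Fix a set $\mathsf{Stamp}$ and a relation $to\subseteq\mathsf{Stamp}\times\mathsf{Stamp}$. An execution is $\langle E,po,stmp,so,hb\rangle$ where $\langle E,po\rangle$ is a plain execution, $stmp$ maps each event of $E$ to a nonempty set of stamps, inducing subevents $\mathsf{SEvent}=\{\langle e,a\rangle: e\in E, a\in stmp(e)\}$, and $so,hb\subseteq\mathsf{SEvent}\times\mathsf{SEvent}$. Its preserved program order is $ppo=\{\langle\langle e_1,a_1\rangle,\langle e_2,a_2\rangle\rangle:\langle e_1,e_2\rangle\in po,\ a_i\in stmp(e_i),\ \langle a_1,a_2\rangle\in to\}$. Libraries. A library is a triple $L=\langle M,\mathsf{loc},\mathcal C\rangle$: $M\subseteq\mathsf{Method}$; $\mathsf{loc}$ maps each event whose method lies in $M$ to a set of locations; $\mathcal C$ is a set of executions satisfying (monotonicity) if $\langle E,po,stmp,so,hb\rangle\in\mathcal C$ and $(ppo\cup so)^+\subseteq hb'\subseteq hb$ then $\langle E,po,stmp,so,hb'\rangle\in\mathcal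 C$, and (decomposability) if $\langle E_1\uplus E_2,po,stmp,so,hb\rangle\in\mathcal C$ and $\mathsf{loc}(E_1)\cap\mathsf{loc}(E_2)=\emptyset$ then its restriction to $E_1$ (restricting $po$, $stmp$, and $so,hb$ to subevents of events in $E_1$) is in $\mathcal C$. For a set $E$ of events, $E|_L$ is the set of events of $E$ whose method is in $L.M$; for an execution, restriction $|_L$ restricts $E$, $po$, $stmp$, and $so,hb$ to (subevents of) events in $E|_L$. For an event $e$, $\mathsf{loc}(e)$ is given by the library containing its method, and $\mathsf{loc}(E)=\bigcup_{e\in E}\mathsf{loc}(e)$. Two libraries are compatible if their method sets are disjoint. Consistency and outcomes. For a set $\Lambda$ of pairwise compatible libraries, an execution $\langle E,po,stmp,so,hb\rangle$ is $\Lambda$-consistent if: $(ppo\cup so)^+\subseteq hb$ and $hb$ is a strict partial order; $E=\bigcup_{L\in\Lambda}E|_L$ and $so=\bigcup_{L\in\Lambda}so|_L$; and for every $L\in\Lambda$ the restriction to $L$ belongs to $L.\mathcal C$. Then $\mathsf{outcome}_\Lambda(\vec p)=\{\vec v:\exists\,\Lambda\text{-consistent }\langle E,po,stmp,so,hb\rangle.\ \langle\vec v,\langle E,po\rangle\rangle\in[\![\vec p]\!]\}$, and $\mathsf{loc}(\vec p)=\bigcup_{\langle\_,\langle E,\_\rangle\rangle\in[\![\vec p]\!]}\mathsf{loc}(E)$. Implementations. An implementation of $L$ is a function $I:\mathsf{Tid}\times L.M\times\mathsf{Val}^*\to\mathsf{SeqProg}$. It is well defined for $L$ using $\Lambda$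 if $L\notin\Lambda$ and for all $t,m,\vec v$: $I(t,m,\vec v)$ only calls methods of libraries in $\Lambda$; no element of $[\![I(t,m,\vec v)]\!]_t$ has the form $\langle\langle\_,k+1\rangle,\_\rangle$; and if $\langle\langle v,0\rangle,\langle E,po\rangle\rangle\in[\![I(t,m,\vec v)]\!]_t$ then $E\neq\emptyset$. $\mathsf{loc}(I)=\bigcup_{t,m,\vec v}\bigcup_{\langle\_,\langle E,\_\rangle\rangle\in[\![I(t,m,\vec v)]\!]_t}\mathsf{loc}(E)$. The translation $\langle\!\langle\cdot\rangle\!\rangle$ replaces, in thread $t$, each call $m(\vec v)$ with $m\in L.M$ by $I(t,m,\vec v)$ and leaves everything else unchanged ($\langle\!\langle v\rangle\!\rangle_t=v$, $\langle\!\langle\mathtt{break}_k v\rangle\!\rangle_t=\mathtt{break}_k v$, $\langle\!\langle\mathtt{loop}\,p\rangle\!\rangle_t=\mathtt{loop}\,\langle\!\langle p\rangle\!\rangle_t$, $\langle\!\langle\mathtt{let}\,p\,\mathsf f\rangle\!\rangle_t=\mathtt{let}\,\langle\!\langle p\rangle\!\rangle_t\,(\lambda v.\langle\!\langle\mathsf f\,v\rangle\!\rangle_t)$), and $\langle\!\langle\langle p_1,\dots,p_T\rangle\rangle\!\rangle_I=\langle\langle\!\langle p_1\rangle\!\rangle_1,\dots,\langle\!\langle p_T\rangle\!\rangle_T\rangle$. Abstraction. For plain executions $G=\langle E,po\rangle$ (using methods of $\Lambda$) and $G'=\langle E',po'\rangle$ (using methods of $L$), a surjective $f:E\to E'$ abstracts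 $G$ to $G'$ if: $E|_L=\emptyset$ and $E'|_L=E'$; $f(po)\subseteq(po')^*$ (where $f(r)=\{\langle f(x),f(y)\rangle:\langle x,y\rangle\in r\}$ and $^*$ is reflexive-transitive closure) and for all $e_1,e_2$, $\langle f(e_1),f(e_2)\rangle\in po'$ implies $\langle e_1,e_2\rangle\in po$; and for every $e'=\langle t,\iota,\langle m,\vec v,v'\rangle\rangle\in E'$, $\langle\langle v',0\rangle,G|_{f^{-1}(e')}\rangle\in[\![I(t,m,\vec v)]\!]_t$, where $G|_A=\langle A,po\cap(A\times A)\rangle$. Local soundness. A well-defined implementation $I$ of $L$ using $\Lambda$ is locally sound if, whenever $\mathcal G=\langle E,po,stmp,so,hb\rangle$ is $\Lambda$-consistent and $f$ abstracts $\langle E,po\rangle$ to $\langle E',po'\rangle$, there exist $stmp'$ (on $E'$), $so'$, and a function $g$ from the subevents of $\langle E',po',stmp'\rangle$ to $\mathcal G.\mathsf{SEvent}$ such that: (i) if $g(\langle e',a'\rangle)=\langle e,a\rangle$ then $f(e)=e'$, and for every stamp $a_0$ with $\langle a_0,a'\rangle\in to$ there is $\langle e_1,a_1\rangle\in\mathcal G.\mathsf{SEvent}$ with $f(e_1)=e'$, $\langle a_0,a_1\rangle\in to$ and $\langle\langle e_1,a_1\rangle,\langle e,a\rangle\rangle\in hb^*$, and for every stamp $a_0$ with $\langle a',a_0\rangle\in to$ there is $\langle e_2,a_2\rangle\in\mathcal G.\mathsf{SEvent}$ with $f(e_2)=e'$, $\langle a_2,a_0\rangle\in to$ and $\langle\langle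 e,a\rangle,\langle e_2,a_2\rangle\rangle\in hb^*$; (ii) $g(so')\subseteq hb$; (iii) for every transitive $hb'$ with $(ppo'\cup so')^+\subseteq hb'$ and $g(hb')\subseteq hb$, we have $\langle E',po',stmp',so',hb'\rangle\in L.\mathcal C$, where $ppo'$ is the preserved program order of $\langle E',po',stmp'\rangle$. *)

From Stdlib Require Import List PArith Relations ClassicalEpsilon.
From mathcomp Require Import ssreflect ssrfun ssrbool eqtype ssrnat fintype.

Set Implicit Arguments.
Unset Strict Implicit.

Section Model.

Context (Val Loc Method : Type) (T : nat) (Stamp : Type)
        (to : Stamp -> Stamp -> Prop).

(* Threads {1,...,T}, represented (0-based) as 'I_T. *)
Definition Tid := 'I_T.

Inductive SeqProg : Type :=
| PVal   (v : Val)
| PCall  (m : Method) (vs : list Val)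
| PLet   (p : SeqProg) (f : Val -> SeqProg)
| PLoop  (p : SeqProg)
| PBreak (k : positive) (v : Val).

Definition ConcProg := Tid -> SeqProg.

Record Event : Type := mkEv {
  ev_tid : Tid; ev_id : nat; ev_meth : Method; ev_args : list Val; ev_out : Val }.

Record PExec : Type := mkPExec { pE : Event -> Prop; ppo : Event -> Event -> Prop }.

Definition is_plain (G : PExec) : Prop :=
  (forall x y, ppo G x y -> pE G x /\ pE G y) /\
  (forall x y, ppo G x y -> ev_tid x = ev_tid y) /\
  (forall x, ~ ppo G x x) /\
  (forall x y z, ppo G x y -> ppo G y z -> ppo G x z) /\
  (forall x y, pE G x -> pE G y -> ev_tid x = ev_tid y -> x <> y ->
     ppo G x y \/ ppo G y x).

Definition peq (G H : PExec) : Prop :=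
  (forall e, pE G e <-> pE H e) /\ (forall x y, ppo G x y <-> ppo H x y).

Definition emptyG : PExec := mkPExec (fun _ => False) (fun _ _ => False).
Definition singleG (e : Event) : PExec := mkPExec (fun x => x = e) (fun _ _ => False).

Definition disjointE (A B : Event -> Prop) : Prop := forall e, A e -> B e -> False.

Definition seqG (G1 G2 : PExec) : PExec :=
  mkPExec (fun e => pE G1 e \/ pE G2 e)
          (fun x y => ppo G1 x y \/ ppo G2 x y \/ (pE G1 x /\ pE G2 y)).

Fixpoint seqn (Gs : nat -> PExec) (j : nat) : PExec :=
  match j with
  | 0 => Gs 0
  | S j' => seqG (seqn Gs j') (Gs (S j'))
  end.

Definition parG (Gs : Tid -> PExec) : PExec :=
  mkPExec (fun e => exists t, pE (Gs t) e) (fun x y => exists t, ppo (Gs t) x y).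

(* [sem t p v k G] : <<v,k>,G> \in [[p]]_t *)
Fixpoint sem (t : Tid) (p : SeqProg) (v : Val) (k : nat) (G : PExec) : Prop :=
  match p with
  | PVal v0 => v = v0 /\ k = 0 /\ peq G emptyG
  | PBreak kk v0 => v = v0 /\ k = Pos.to_nat kk /\ peq G emptyG
  | PCall m vs => k = 0 /\ exists iota, peq G (singleG (mkEv t iota m vs v))
  | PLet p1 f =>
      (exists v1 G1 G2, sem t p1 v1 0 G1 /\ sem t (f v1) v k G2 /\
         disjointE (pE G1) (pE G2) /\ peq G (seqG G1 G2))
      \/ (sem t p1 v k G /\ k <> 0)
  | PLoop p1 =>
      exists (j : nat) (Gs : nat -> PExec),
        (forall i, i < j -> exists v', sem t p1 v' 0 (Gs i)) /\
        sem t p1 v (S k) (Gs j) /\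
        (forall i i', i <= j -> i' <= j -> i <> i' -> disjointE (pE (Gs i)) (pE (Gs i'))) /\
        peq G (seqn Gs j)
  end.

Definition sem_conc (p : ConcProg) (vs : Tid -> Val) (G : PExec) : Prop :=
  exists Gs : Tid -> PExec,
    (forall t, sem t (p t) (vs t) 0 (Gs t)) /\
    (forall t t', t <> t' -> disjointE (pE (Gs t)) (pE (Gs t'))) /\
    peq G (parG Gs).

Definition SEv : Type := (Event * Stamp)%type.

Record Exec : Type := mkExec {
  xE : Event -> Prop;
  xpo : Event -> Event -> Prop;
  xstmp : Event -> Stamp -> Prop;
  xso : SEv -> SEv -> Prop;
  xhb : SEv -> SEv -> Prop }.

Definition xplain (X : Exec) : PExec := mkPExec (xE X) (xpo X).

Definition subev (E : Event -> Prop) (stmp : Event -> Stamp -> Prop) (x : SEv) : Prop :=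
  E (fst x) /\ stmp (fst x) (snd x).

Definition xSE (X : Exec) : SEv -> Prop := subev (xE X) (xstmp X).

(* stmp is a map from events of E to nonempty sets of stamps *)
Definition is_stmp (E : Event -> Prop) (stmp : Event -> Stamp -> Prop) : Prop :=
  (forall e, E e -> exists a, stmp e a) /\ (forall e a, stmp e a -> E e).

Definition is_exec (X : Exec) : Prop :=
  is_plain (xplain X) /\ is_stmp (xE X) (xstmp X) /\
  (forall x y, xso X x y -> xSE X x /\ xSE X y) /\
  (forall x y, xhb X x y -> xSE X x /\ xSE X y).

Definition ppo_of (po : Event -> Event -> Prop) (stmp : Event -> Stamp -> Prop)
  (x y : SEv) : Prop :=
  po (fst x) (fst y) /\ stmp (fst x) (snd x) /\ stmp (fst y) (snd y) /\ to (snd x) (snd y).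

Definition xppo (X : Exec) : SEv -> SEv -> Prop := ppo_of (xpo X) (xstmp X).

Definition union_rel {A : Type} (r s : A -> A -> Prop) : A -> A -> Prop :=
  fun x y => r x y \/ s x y.

Definition incl_rel {A : Type} (r s : A -> A -> Prop) : Prop := forall x y, r x y -> s x y.

Definition restrict (X : Exec) (P : Event -> Prop) : Exec :=
  let E' := fun e => xE X e /\ P e in
  mkExec E'
    (fun x y => xpo X x y /\ E' x /\ E' y)
    (fun e a => xstmp X e a /\ E' e)
    (fun x y => xso X x y /\ E' (fst x) /\ E' (fst y))
    (fun x y => xhb X x y /\ E' (fst x) /\ E' (fst y)).

Record Library : Type := mkLib {
  lM : Method -> Prop;
  lloc : Event -> Loc -> Prop;   (* meaningful for events whose method is in lM *)
  lC : Exec -> Prop }.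

Definition locL (L : Library) (e : Event) (l : Loc) : Prop :=
  lM L (ev_meth e) /\ lloc L e l.

Definition locSetL (L : Library) (E : Event -> Prop) (l : Loc) : Prop :=
  exists e, E e /\ locL L e l.

Definition is_library (L : Library) : Prop :=
  (forall X hb',
     lC L X ->
     incl_rel (clos_trans _ (union_rel (xppo X) (xso X))) hb' ->
     incl_rel hb' (xhb X) ->
     lC L (mkExec (xE X) (xpo X) (xstmp X) (xso X) hb')) /\
  (forall X (E1 E2 : Event -> Prop),
     lC L X ->
     (forall e, xE X e <-> E1 e \/ E2 e) -> disjointE E1 E2 ->
     (forall l, locSetL L E1 l -> locSetL L E2 l -> False) ->
     lC L (restrict X E1)).

Definition compatible (L1 L2 : Library) : Prop :=
  forall m, lM L1 m -> lM L2 m -> False.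

Definition LibSet := Library -> Prop.

Definition pairwise_compatible (Lam : LibSet) : Prop :=
  forall L1 L2, Lam L1 -> Lam L2 -> L1 <> L2 -> compatible L1 L2.

Definition add_lib (Lam : LibSet) (L : Library) : LibSet :=
  fun L' => Lam L' \/ L' = L.

Definition locLam (Lam : LibSet) (e : Event) (l : Loc) : Prop :=
  exists L, Lam L /\ locL L e l.

Definition methods_of (Lam : LibSet) (m : Method) : Prop :=
  exists L, Lam L /\ lM L m.

Definition consistent (Lam : LibSet) (X : Exec) : Prop :=
  is_exec X /\
  incl_rel (clos_trans _ (union_rel (xppo X) (xso X))) (xhb X) /\
  (forall x, ~ xhb X x x) /\
  (forall x y z, xhb X x y -> xhb X y z -> xhb X x z) /\
  (forall e, xE X e -> methods_of Lam (ev_meth e)) /\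
  (forall x y, xso X x y ->
     exists L, Lam L /\ lM L (ev_meth (fst x)) /\ lM L (ev_meth (fst y))) /\
  (forall L, Lam L -> lC L (restrict X (fun e => lM L (ev_meth e)))).

Definition outcome (Lam : LibSet) (p : ConcProg) (vs : Tid -> Val) : Prop :=
  exists X, consistent Lam X /\ sem_conc p vs (xplain X).

Fixpoint calls_only (P : Method -> Prop) (p : SeqProg) : Prop :=
  match p with
  | PVal _ => True
  | PBreak _ _ => True
  | PCall m _ => P m
  | PLet p1 f => calls_only P p1 /\ forall v, calls_only P (f v)
  | PLoop p1 => calls_only P p1
  end.

Definition locProg (Lam : LibSet) (p : ConcProg) (l : Loc) : Prop :=
  exists vs G e, sem_conc p vs G /\ pE G e /\ locLam Lam e l.

Definition Impl := Tid -> Method -> list Val -> SeqProg.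

Definition well_defined (I : Impl) (L : Library) (Lam : LibSet) : Prop :=
  ~ Lam L /\
  forall t m vs, lM L m ->
    calls_only (methods_of Lam) (I t m vs) /\
    (forall v k G, sem t (I t m vs) v k G -> k = 0) /\
    (forall v G, sem t (I t m vs) v 0 G -> exists e, pE G e).

Definition locImpl (I : Impl) (L : Library) (Lam : LibSet) (l : Loc) : Prop :=
  exists t m vs v k G e,
    lM L m /\ sem t (I t m vs) v k G /\ pE G e /\ locLam Lam e l.

Fixpoint trans (I : Impl) (L : Library) (t : Tid) (p : SeqProg) : SeqProg :=
  match p with
  | PVal v => PVal v
  | PBreak k v => PBreak k v
  | PCall m vs =>
      if excluded_middle_informative (lM L m) then I t m vs else PCall m vs
  | PLet p1 f => PLet (trans I L t p1) (fun v => trans I L t (f v))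
  | PLoop p1 => PLoop (trans I L t p1)
  end.

Definition transC (I : Impl) (L : Library) (p : ConcProg) : ConcProg :=
  fun t => trans I L t (p t).

Definition restrictG (G : PExec) (A : Event -> Prop) : PExec :=
  mkPExec A (fun x y => ppo G x y /\ A x /\ A y).

Definition abstracts (I : Impl) (L : Library) (G G' : PExec)
    (f : Event -> Event) : Prop :=
  (forall e, pE G e -> pE G' (f e)) /\
  (forall e', pE G' e' -> exists e, pE G e /\ f e = e') /\
  (forall e, pE G e -> ~ lM L (ev_meth e)) /\
  (forall e', pE G' e' -> lM L (ev_meth e')) /\
  (forall e1 e2, ppo G e1 e2 -> clos_refl_trans _ (ppo G') (f e1) (f e2)) /\
  (forall e1 e2, pE G e1 -> pE G e2 -> ppo G' (f e1) (f e2) -> ppo G e1 e2) /\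
  (forall e', pE G' e' ->
     sem (ev_tid e') (I (ev_tid e') (ev_meth e') (ev_args e')) (ev_out e') 0
         (restrictG G (fun e => pE G e /\ f e = e'))).

Definition locally_sound (I : Impl) (L : Library) (Lam : LibSet) : Prop :=
  forall (X : Exec) (G' : PExec) (f : Event -> Event),
    consistent Lam X -> is_plain G' -> abstracts I L (xplain X) G' f ->
    exists (stmp' : Event -> Stamp -> Prop) (so' : SEv -> SEv -> Prop) (g : SEv -> SEv),
      is_stmp (pE G') stmp' /\
      (forall x y, so' x y -> subev (pE G') stmp' x /\ subev (pE G') stmp' y) /\
      (forall x, subev (pE G') stmp' x -> xSE X (g x)) /\
      (* (i) *)
      (forall e' a' e a, subev (pE G') stmp' (e', a') -> g (e', a') = (e, a) ->
         f e = e' /\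
         (forall a0, to a0 a' -> exists e1 a1,
            xSE X (e1, a1) /\ f e1 = e' /\ to a0 a1 /\
            clos_refl_trans _ (xhb X) (e1, a1) (e, a)) /\
         (forall a0, to a' a0 -> exists e2 a2,
            xSE X (e2, a2) /\ f e2 = e' /\ to a2 a0 /\
            clos_refl_trans _ (xhb X) (e, a) (e2, a2))) /\
      (forall x y, so' x y -> xhb X (g x) (g y)) /\
      (forall hb' : SEv -> SEv -> Prop,
         (forall x y, hb' x y -> subev (pE G') stmp' x /\ subev (pE G') stmp' y) ->
         (forall x y z, hb' x y -> hb' y z -> hb' x z) ->
         incl_rel (clos_trans _ (union_rel (ppo_of (ppo G') stmp') so')) hb' ->
         (forall x y, hb' x y -> xhb X (g x) (g y)) ->
         lC L (mkExec (pE G') (ppo G') stmp' so' hb')).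

Definition sound (I : Impl) (L : Library) (Lam : LibSet) : Prop :=
  forall p : ConcProg,
    (forall t, calls_only (methods_of (add_lib Lam L)) (p t)) ->
    (forall l, locImpl I L Lam l -> locProg (add_lib Lam L) p l -> False) ->
    forall vs, outcome Lam (transC I L p) vs -> outcome (add_lib Lam L) p vs.

End Model.

(* A consistent execution [X] of the translated program consists of client
   events, which also occur in the source program, and of the events of the
   bodies of calls to [L]-methods.  Collapsing every body to one abstract call
   (thread by thread, by induction on the program, with fresh identifiers for
   the calls) yields a plain execution [G'] of the source program and an
   abstraction map [f].  Implementation events only touch locations of [I] and
   client events only locations of the program, so by decomposability the
   restriction of [X] to implementation events is still consistent, and local
   soundness provides stamps, synchronisation and happens-before for the calls.
   The execution of the source program glues the client part of [X] to this
   [L]-part; its happens-before is pulled back from [X] along [g], and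
   condition (i) of local soundness is what lets program order between a call
   and its neighbours be realised in [X]. *)

From Stdlib Require Import Relations ClassicalEpsilon Classical.
From Stdlib Require Import FunctionalExtensionality PropExtensionality Lia.
From mathcomp Require Import ssreflect ssrfun ssrbool eqtype ssrnat zify.

Set Implicit Arguments.
Unset Strict Implicit.

(** * Plain semantics *)

Section PlainSemantics.
Context (Val Method : Type) (T : nat).
Notation PE := (PExec Val Method T).
Notation Ev := (Event Val Method T).

Lemma peq_refl (G : PE) : peq G G.
Proof. split; move=> *; tauto. Qed.

Lemma peq_sym (G H : PE) : peq G H -> peq H G.
Proof. move=> [HE Hpo]; split; move=> *; [rewrite HE|rewrite Hpo]; tauto. Qed.

Lemma peq_trans (G H K : PE) : peq G H -> peq H K -> peq G K.
Proof.
  move=> [HE1 Hpo1] [HE2 Hpo2]; split; move=> *; [rewrite HE1 HE2|rewrite Hpo1 Hpo2]; tauto.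
Qed.

Lemma sem_peq t p : forall v k (G H : PE), peq G H -> sem t p v k G -> sem t p v k H.
Proof.
  elim: p => [v0|m vs|p1 IH1 f _|p1 _|kk v0] v k G H GH /=;
    have HK : forall K : PE, peq G K -> peq H K
      by move=> K GK; exact: peq_trans (peq_sym GH) GK.
  - move=> [? [? ?]]; auto.
  - move=> [? [iota ?]]; eauto.
  - move=> [[v1 [G1 [G2 [? [? [? ?]]]]]]|[? ?]].
    + left; exists v1, G1, G2; auto.
    + right; eauto.
  - move=> [j [Gs [? [? [? ?]]]]]; exists j, Gs; auto.
  - move=> [? [? ?]]; auto.
Qed.

Definition po_within (G : PE) : Prop := forall x y, ppo G x y -> pE G x /\ pE G y.

Lemma in_seqn (Gs : nat -> PE) j e : pE (seqn Gs j) e <-> exists2 i, i <= j & pE (Gs i) e.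
Proof.
  elim: j => [|j IH] /=.
  - split; [by exists 0|move=> [i Hi He]; by have -> : 0 = i by lia].
  - rewrite IH; split.
    + move=> [[i Hi He]|He]; [exists i; [lia|auto]|by exists j.+1].
    + move=> [i Hi He]; case: (leqP i j) => Hij; [left; by exists i|].
      by right; have -> : j.+1 = i by lia.
Qed.

Lemma seqn_ext (Gs Hs : nat -> PE) j :
  (forall i, i <= j -> Gs i = Hs i) -> seqn Gs j = seqn Hs j.
Proof.
  elim: j => [|j IH] /= GH; [by apply: GH|].
  rewrite IH ?GH //; move=> *; apply GH; lia.
Qed.

Lemma seqn_po_within (Gs : nat -> PE) j :
  (forall i, i <= j -> po_within (Gs i)) -> po_within (seqn Gs j).
Proof.
  elim: j => [|j IH] /= HGs; [by apply: HGs|].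
  move=> x y [Hp|[Hp|[Hx Hy]]] /=; auto.
  - have [] := IH (fun i Hi => HGs i (leqW Hi)) x y Hp; tauto.
  - have [] := HGs j.+1 (leqnn _) x y Hp; tauto.
Qed.

Lemma loop_iterations_sem t p v k (Gs : nat -> PE) j :
  (forall i, i < j -> exists v', sem t p v' 0 (Gs i)) -> sem t p v k (Gs j) ->
  forall i, i <= j -> exists v' k', sem t p v' k' (Gs i).
Proof.
  move=> Hpre Hlast i Hi; case: (leqP j i) => Hji.
  - have -> : i = j by lia. eauto.
  - have [v' ?] := Hpre i Hji; eauto.
Qed.

Lemma sem_po_within t p : forall v k (G : PE), sem t p v k G -> po_within G.
Proof.
  elim: p => [v0|m vs|p1 IH1 f IHf|p1 IH1|kk v0] v k G /=.
  - by move=> [_ [_ [_ Hq]]] x y /Hq.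
  - by move=> [_ [iota [_ Hq]]] x y /Hq.
  - move=> [[v1 [G1 [G2 [S1 [S2 [_ [HE Hpo]]]]]]]|[Hs _]]; last exact: IH1 Hs.
    move=> x y /Hpo; rewrite !HE /= => -[h|[h|h]]; last tauto.
    + have := IH1 _ _ _ S1 _ _ h; tauto.
    + have := IHf _ _ _ _ S2 _ _ h; tauto.
  - move=> [j [Gs [Hpre [Hlast [_ [HE Hpo]]]]]] x y /Hpo hp; rewrite !HE.
    apply: (seqn_po_within _ hp) => i Hi.
    have [v' [k' Si]] := loop_iterations_sem Hpre Hlast Hi; exact: IH1 Si.
  - by move=> [_ [_ [_ Hq]]] x y /Hq.
Qed.

Lemma sem_events (P : Method -> Prop) t p : forall v k (G : PE),
  calls_only P p -> sem t p v k G -> forall e, pE G e -> ev_tid e = t /\ P (ev_meth e).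
Proof.
  elim: p => [v0|m vs|p1 IH1 f IHf|p1 IH1|kk v0] v k G /=.
  - by move=> _ [_ [_ [Hq _]]] e /Hq.
  - by move=> Hm [_ [iota [Hq _]]] e /Hq ->.
  - move=> [Hc1 Hc2] [[v1 [G1 [G2 [S1 [S2 [_ [HE _]]]]]]]|[Hs _]] e; last exact: IH1 Hc1 Hs e.
    by move=> /HE [He|He]; [exact: IH1 _ _ _ Hc1 S1 e He|exact: IHf v1 _ _ _ (Hc2 v1) S2 e He].
  - move=> Hc [j [Gs [Hpre [Hlast [_ [HE _]]]]]] e /HE /in_seqn [i Hi He].
    have [v' [k' Si]] := loop_iterations_sem Hpre Hlast Hi; exact: IH1 Hc Si e He.
  - by move=> _ [_ [_ [Hq _]]] e /Hq.
Qed.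

Lemma calls_only_any (p : SeqProg Val Method) : calls_only (fun _ => True) p.
Proof. by elim: p => //= p1 IH1 f IHf; split. Qed.

Lemma sem_tid t p v k (G : PE) : sem t p v k G -> forall e, pE G e -> ev_tid e = t.
Proof. move=> Hs e He; exact: proj1 (sem_events (calls_only_any p) Hs He). Qed.

Lemma restrictG_peq (G H : PE) (A B : Ev -> Prop) :
  peq G H -> (forall x, A x <-> B x) -> peq (restrictG G A) (restrictG H B).
Proof. move=> [_ Hpo] AB; split=> [x|x y] /=; [exact: AB|rewrite Hpo !AB; tauto]. Qed.

Lemma restrictG_seqG_l (G1 G2 : PE) (A B : Ev -> Prop) :
  disjointE (pE G1) (pE G2) -> po_within G2 ->
  (forall x, A x <-> B x) -> (forall x, A x -> pE G1 x) ->
  peq (restrictG G1 A) (restrictG (seqG G1 G2) B).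
Proof.
  move=> D P2 AB A1; split=> [x|x y] /=; [exact: AB|rewrite -!AB; split; [tauto|]].
  move=> [[h|[h|[_ h]]] [Ax Ay]]; [tauto| |]; exfalso.
  - exact: D (A1 _ Ax) (proj1 (P2 _ _ h)).
  - exact: D (A1 _ Ay) h.
Qed.

Lemma restrictG_seqG_r (G1 G2 : PE) (A B : Ev -> Prop) :
  disjointE (pE G1) (pE G2) -> po_within G1 ->
  (forall x, A x <-> B x) -> (forall x, A x -> pE G2 x) ->
  peq (restrictG G2 A) (restrictG (seqG G1 G2) B).
Proof.
  move=> D P1 AB A2; split=> [x|x y] /=; [exact: AB|rewrite -!AB; split; [tauto|]].
  move=> [[h|[h|[h _]]] [Ax Ay]]; [| tauto |]; exfalso.
  - exact: D (proj1 (P1 _ _ h)) (A2 _ Ax).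
  - exact: D h (A2 _ Ax).
Qed.

Lemma disjoint_rel_union (A A' B B' : Ev -> Prop) (R1 R2 : Ev -> Ev -> Prop) x x' :
  (forall y y', R2 y y' -> B y /\ B' y') -> disjointE A B -> disjointE A' B' ->
  A x \/ A' x' -> R1 x x' \/ R2 x x' -> R1 x x'.
Proof.
  move=> HR2 D D' hx [h|h]; [done|exfalso; have [hy hy'] := HR2 _ _ h].
  by case: hx => hx; [exact: D hx hy|exact: D' hx hy'].
Qed.

End PlainSemantics.

(** * Abstracting executions of translated programs *)

Section Abstraction.
Context (Val Loc Method : Type) (T : nat) (Stamp : Type).
Context (L : Library Val Loc Method T Stamp) (I : Impl Val Method T).
Notation PE := (PExec Val Method T).
Notation Ev := (Event Val Method T).
Notation LM e := (lM L (ev_meth e)).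

(* A relational version of [abstracts] for one thread [t]; the abstract
   [L]-events receive the identifiers in [[n0, n1)], which keeps the abstract
   events of sequentially composed fragments apart. *)
Record ThreadAbs (t : Tid T) (n0 n1 : nat) (G G' : PE) (R : Ev -> Ev -> Prop) : Prop := {
  ta_dom : forall e e', R e e' -> pE G e /\ pE G' e';
  ta_total : forall e, pE G e -> exists e', R e e';
  ta_functional : forall e e1 e2, R e e1 -> R e e2 -> e1 = e2;
  ta_surjective : forall e', pE G' e' -> exists e, R e e';
  ta_client : forall e e', R e e' -> ~ LM e' -> e' = e;
  ta_impl : forall e e', R e e' -> LM e' ->
    ev_tid e' = t /\ n0 <= ev_id e' < n1 /\
    sem t (I t (ev_meth e') (ev_args e')) (ev_out e') 0 (restrictG G (fun x => R x e'));
  ta_po : forall x y x' y', ppo G x y -> R x x' -> R y y' -> x' = y' \/ ppo G' x' y';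
  ta_po_reflect : forall x y x' y', R x x' -> R y y' -> ppo G' x' y' -> ppo G x y }.

Lemma thread_abs_peq t n0 n1 G H G' R :
  peq G H -> ThreadAbs t n0 n1 G G' R -> ThreadAbs t n0 n1 H G' R.
Proof.
  move=> [HE Hpo] [A1 A2 A3 A4 A5 A6 A7 A8]; split; auto.
  - move=> e e' h; rewrite -HE; auto.
  - move=> e h; apply A2; rewrite HE; auto.
  - move=> e e' h1 h2; have [? [? S]] := A6 e e' h1 h2; split; [done|split; [done|]].
    apply: (sem_peq _ S); apply restrictG_peq; [split|]; auto; tauto.
  - move=> x y x' y' h; apply A7; apply Hpo; auto.
  - move=> *; apply Hpo; eauto.
Qed.

Lemma thread_abs_id t n (G : PE) :
  (forall e, pE G e -> ~ LM e) -> ThreadAbs t n n G G (fun e e' => pE G e /\ e' = e).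
Proof.
  move=> HG; split.
  - by move=> e e' [? ->].
  - move=> e h; exists e; auto.
  - by move=> e e1 e2 [_ ->] [_ ->].
  - move=> e' h; exists e'; auto.
  - by move=> e e' [_ ->].
  - move=> e e' [h ->] hL; exfalso; exact: HG h hL.
  - move=> x y x' y' h [_ ->] [_ ->]; auto.
  - by move=> x y x' y' [_ ->] [_ ->].
Qed.

Lemma thread_abs_disjoint t n0 n1 n2 G1 G2 G1' G2' R1 R2 :
  ThreadAbs t n0 n1 G1 G1' R1 -> ThreadAbs t n1 n2 G2 G2' R2 ->
  disjointE (pE G1) (pE G2) -> disjointE (pE G1') (pE G2').
Proof.
  move=> A B D e h1 h2.
  have [x hx] := ta_surjective A h1; have [y hy] := ta_surjective B h2.
  case: (classic (LM e)) => hL.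
  - have [_ [? _]] := ta_impl A hx hL; have [_ [? _]] := ta_impl B hy hL; lia.
  - have ex := ta_client A hx hL; have ey := ta_client B hy hL; subst.
    exact (D _ (proj1 (ta_dom A hx)) (proj1 (ta_dom B hy))).
Qed.

Lemma thread_abs_seq t n0 n1 n2 G1 G2 G1' G2' R1 R2 :
  n0 <= n1 -> n1 <= n2 ->
  ThreadAbs t n0 n1 G1 G1' R1 -> ThreadAbs t n1 n2 G2 G2' R2 ->
  disjointE (pE G1) (pE G2) ->
  po_within G1 -> po_within G2 -> po_within G1' -> po_within G2' ->
  ThreadAbs t n0 n2 (seqG G1 G2) (seqG G1' G2') (fun e e' => R1 e e' \/ R2 e e').
Proof.
  move=> Hn1 Hn2 A B D P1 P2 P1' P2'.
  have D' := thread_abs_disjoint A B D.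
  have in1 : forall x x', pE G1 x \/ pE G1' x' -> R1 x x' \/ R2 x x' -> R1 x x'.
  { move=> x x'; exact: disjoint_rel_union (ta_dom B) D D'. }
  have in2 : forall x x', pE G2 x \/ pE G2' x' -> R1 x x' \/ R2 x x' -> R2 x x'.
  { move=> x x' hx h; apply: (disjoint_rel_union (ta_dom A) _ _ hx (proj1 (or_comm _ _) h)).
    - move=> e h2 h1; exact: D h1 h2.
    - move=> e h2 h1; exact: D' h1 h2. }
  split=> /=.
  - move=> e e' [h|h]; [have [] := ta_dom A h|have [] := ta_dom B h]; auto.
  - move=> e [h|h]; [have [] := ta_total A h|have [] := ta_total B h]; eauto.
  - move=> e e1 e2 [h1|h1] h2.
    + exact (ta_functional A h1 (in1 _ _ (or_introl (proj1 (ta_dom A h1))) h2)).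
    + exact (ta_functional B h1 (in2 _ _ (or_introl (proj1 (ta_dom B h1))) h2)).
  - move=> e' [h|h]; [have [] := ta_surjective A h|have [] := ta_surjective B h]; eauto.
  - move=> e e' [h|h]; [exact (ta_client A h)|exact (ta_client B h)].
  - move=> e e' [h|h] hL.
    + have [? [? S]] := ta_impl A h hL; split; [done|split; [lia|]].
      apply: (sem_peq _ S); apply: restrictG_seqG_l D P2 _ _ => x.
      * by split; [left|apply: in1; right; exact (proj2 (ta_dom A h))].
      * move=> hx; exact (proj1 (ta_dom A hx)).
    + have [? [? S]] := ta_impl B h hL; split; [done|split; [lia|]].
      apply: (sem_peq _ S); apply: restrictG_seqG_r D P1 _ _ => x.
      * by split; [right|apply: in2; right; exact (proj2 (ta_dom B h))].
      * move=> hx; exact (proj1 (ta_dom B hx)).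
  - move=> x y x' y' [hp|[hp|[hx hy]]] rx ry.
    + have [? ?] := P1 _ _ hp.
      case: (ta_po A hp (in1 _ _ (or_introl _) rx) (in1 _ _ (or_introl _) ry)); auto.
    + have [? ?] := P2 _ _ hp.
      case: (ta_po B hp (in2 _ _ (or_introl _) rx) (in2 _ _ (or_introl _) ry)); auto.
    + right; right; right; split.
      * exact (proj2 (ta_dom A (in1 _ _ (or_introl hx) rx))).
      * exact (proj2 (ta_dom B (in2 _ _ (or_introl hy) ry))).
  - move=> x y x' y' rx ry [hp|[hp|[hx hy]]].
    + have [hx hy] := P1' _ _ hp; left.
      exact (ta_po_reflect A (in1 _ _ (or_intror hx) rx) (in1 _ _ (or_intror hy) ry) hp).
    + have [hx hy] := P2' _ _ hp; right; left.
      exact (ta_po_reflect B (in2 _ _ (or_intror hx) rx) (in2 _ _ (or_intror hy) ry) hp).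
    + right; right; split.
      * exact (proj1 (ta_dom A (in1 _ _ (or_intror hx) rx))).
      * exact (proj1 (ta_dom B (in2 _ _ (or_intror hy) ry))).
Qed.

Lemma thread_abs_seqn t (P : nat -> PE -> Prop) (Gs : nat -> PE) j n0 :
  (forall i n, i <= j -> exists H R n', n <= n' /\ (P i H /\ po_within H) /\
                                        ThreadAbs t n n' (Gs i) H R) ->
  (forall i, i <= j -> po_within (Gs i)) ->
  (forall i i', i <= j -> i' <= j -> i <> i' -> disjointE (pE (Gs i)) (pE (Gs i'))) ->
  exists Gs' R n1, n0 <= n1 /\ (forall i, i <= j -> P i (Gs' i) /\ po_within (Gs' i)) /\
    (forall i i', i <= j -> i' <= j -> i <> i' -> disjointE (pE (Gs' i)) (pE (Gs' i'))) /\
    ThreadAbs t n0 n1 (seqn Gs j) (seqn Gs' j) R.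
Proof.
  elim: j => [|j IH] Hdec PGs DGs.
  - have [H [R [n1 [? [? ?]]]]] := Hdec 0 n0 (leqnn 0).
    exists (fun _ => H), R, n1; split; [auto|split; [|split; [|done]]].
    + by move=> i Hi; have -> : i = 0 by lia.
    + move=> *; lia.
  - have [Gs' [R [n1 [Hn [PGs' [DGs' A]]]]]] := IH
      (fun i n Hi => Hdec i n (leqW Hi)) (fun i Hi => PGs i (leqW Hi))
      (fun i i' Hi Hi' => DGs i i' (leqW Hi) (leqW Hi')).
    have [H [R2 [n2 [Hn2 [PH B]]]]] := Hdec j.+1 n1 (leqnn _).
    have PoGs : po_within (seqn Gs j) by apply: seqn_po_within => i Hi; apply: PGs; lia.
    have PoGs' : po_within (seqn Gs' j) by apply: seqn_po_within => i Hi; exact: proj2 (PGs' i Hi).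
    have D : disjointE (pE (seqn Gs j)) (pE (Gs j.+1)).
    { move=> e he1 he2; have [i Hi Hei] := proj1 (in_seqn _ _ _) he1.
      apply: (DGs i j.+1) Hei he2; lia. }
    have D' := thread_abs_disjoint A B D.
    pose Gs'' := fun i => if i == j.+1 then H else Gs' i.
    have EGs : seqn Gs'' j = seqn Gs' j.
    { apply: seqn_ext => i Hi; rewrite /Gs''; case: eqP => //; lia. }
    exists Gs'', (fun e e' => R e e' \/ R2 e e'), n2.
    split; [lia|split; [|split]].
    + move=> i Hi; rewrite /Gs''; case: eqP => [->|Hne] //; apply: PGs'; lia.
    + have inGs' : forall i e, i <= j -> pE (Gs' i) e -> pE (seqn Gs' j) e.
      { by move=> i e Hi He; apply/in_seqn; exists i. }
      move=> i i' Hi Hi' Hne e; rewrite {1 2}/Gs''.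
      case: eqP => [Ei|Ei]; case: eqP => [Ei'|Ei'] //; [exfalso; lia| | |].
      * move=> h1 h2; apply: (D' e (inGs' i' e _ h2) h1); lia.
      * move=> h1 h2; apply: (D' e (inGs' i e _ h1) h2); lia.
      * apply: DGs'; lia.
    + rewrite /= EGs /Gs'' eqxx; apply: thread_abs_seq A B D _ _ PoGs' _ => //.
      * apply: PGs; lia.
      * exact: proj2 PH.
Qed.

Hypothesis impl_no_break : forall t m vs v k (G : PE),
  lM L m -> sem t (I t m vs) v k G -> k = 0.
Hypothesis impl_nonempty : forall t m vs v (G : PE),
  lM L m -> sem t (I t m vs) v 0 G -> exists e, pE G e.

Lemma thread_abs_call t m vs v k (G : PE) n :
  lM L m -> sem t (I t m vs) v k G ->
  k = 0 /\ ThreadAbs t n n.+1 G (singleG (mkEv t n m vs v))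
                     (fun x e' => pE G x /\ e' = mkEv t n m vs v).
Proof.
  move=> hL Hs; have Hk := impl_no_break hL Hs; subst k; split; [done|split=> /=].
  - by move=> e e' [? ->].
  - by move=> e h; eexists.
  - by move=> e e1 e2 [_ ->] [_ ->].
  - move=> e' ->; have [e he] := impl_nonempty hL Hs; eauto.
  - by move=> e e' [_ ->].
  - move=> e e' [_ ->] _ /=; split; [done|split; [lia|]].
    apply: (sem_peq _ Hs); split=> [x|x y] /=; [tauto|].
    have P := sem_po_within Hs; have := P x y; tauto.
  - move=> x y x' y' _ [_ ->] [_ ->]; auto.
  - done.
Qed.

Definition abstractable t (p : SeqProg Val Method) : Prop :=
  forall v k (G : PE) n0, sem t (trans I L t p) v k G ->
    exists G' R n1, n0 <= n1 /\ sem t p v k G' /\ ThreadAbs t n0 n1 G G' R.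

Lemma abstractable_client t p :
  trans I L t p = p -> (forall v k (G : PE), sem t p v k G -> forall e, pE G e -> ~ LM e) ->
  abstractable t p.
Proof.
  move=> Hp HL v k G n0; rewrite Hp => Hs.
  exists G, (fun e e' => pE G e /\ e' = e), n0; split; [done|split; [done|]].
  apply: thread_abs_id; exact: HL Hs.
Qed.

Lemma abstractable_call t m vs : abstractable t (PCall m vs).
Proof.
  case: (excluded_middle_informative (lM L m)) => hL; last first.
  - apply: abstractable_client.
    + by rewrite /=; destruct excluded_middle_informative.
    + by move=> v k G [_ [iota [HE _]]] e /HE ->.
  - move=> v k G n0 /=; destruct excluded_middle_informative; [move=> Hs|done].
    have [-> A] := thread_abs_call n0 hL Hs.
    exists (singleG (mkEv t n0 m vs v)), (fun x e' => pE G x /\ e' = mkEv t n0 m vs v), n0.+1.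
    split; [lia|split; [|exact: A]]; split; [done|exists n0; exact: peq_refl].
Qed.

Lemma abstractable_let t p1 f :
  abstractable t p1 -> (forall v, abstractable t (f v)) -> abstractable t (PLet p1 f).
Proof.
  move=> IH1 IHf v k G n0; move=> /= [[v1 [G1 [G2 [S1 [S2 [D HG]]]]]]|[S1 Hk]].
  - have [G1' [R1 [n1 [Hn1 [S1' A]]]]] := IH1 _ _ _ n0 S1.
    have [G2' [R2 [n2 [Hn2 [S2' B]]]]] := IHf v1 _ _ _ n1 S2.
    exists (seqG G1' G2'), (fun e e' => R1 e e' \/ R2 e e'), n2; split; [lia|split].
    + left; exists v1, G1', G2'; split; [exact: S1'|split; [exact: S2'|]].
      split; [exact: thread_abs_disjoint A B D|exact: peq_refl].
    + apply: (thread_abs_peq (peq_sym HG)).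
      exact: (thread_abs_seq Hn1 Hn2 A B D (sem_po_within S1) (sem_po_within S2)
                (sem_po_within S1') (sem_po_within S2')).
  - have [G' [R [n1 [Hn1 [S1' A]]]]] := IH1 _ _ _ n0 S1.
    exists G', R, n1; split; [done|split; [right|]]; auto.
Qed.

Lemma abstractable_loop t p1 : abstractable t p1 -> abstractable t (PLoop p1).
Proof.
  move=> IH1 v k G n0 /= [j [Gs [Hpre [Hlast [DGs HG]]]]].
  pose P i H := (i < j -> exists v', sem t p1 v' 0 H) /\ (i = j -> sem t p1 v k.+1 H).
  have Hdec : forall i n, i <= j -> exists H R n',
      n <= n' /\ (P i H /\ po_within H) /\ ThreadAbs t n n' (Gs i) H R.
  { move=> i n Hi; case: (leqP j i) => Hji.
    - have Ei : i = j by lia. subst i.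
      have [H [R [n' [? [S A]]]]] := IH1 _ _ _ n Hlast.
      exists H, R, n'; split; [done|split; [split; [split|exact: sem_po_within S]|done]].
      + move=> *; lia.
      + done.
    - have [v' Hv'] := Hpre i Hji; have [H [R [n' [? [S A]]]]] := IH1 _ _ _ n Hv'.
      exists H, R, n'; split; [done|split; [split; [split|exact: sem_po_within S]|done]].
      + eauto.
      + move=> *; lia. }
  have PGs : forall i, i <= j -> po_within (Gs i).
  { move=> i Hi; have [v' [k' S]] := loop_iterations_sem Hpre Hlast Hi.
    exact: sem_po_within S. }
  have [Gs' [R [n1 [Hn [PGs' [DGs' A]]]]]] := thread_abs_seqn n0 Hdec PGs DGs.
  exists (seqn Gs' j), R, n1; split; [done|split].
  - exists j, Gs'; split; [|split; [|split; [done|exact: peq_refl]]].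
    + move=> i Hi; exact: (proj1 (proj1 (PGs' i (ltnW Hi))) Hi).
    + exact: (proj2 (proj1 (PGs' j (leqnn j))) erefl).
  - exact: thread_abs_peq (peq_sym HG) A.
Qed.

Lemma abstractable_all t p : abstractable t p.
Proof.
  elim: p => [v0|m vs|p1 IH1 f IHf|p1 IH1|kk v0].
  - by apply: abstractable_client => // v k G [_ [_ [HE _]]] e /HE.
  - exact: abstractable_call.
  - exact: abstractable_let.
  - exact: abstractable_loop.
  - by apply: abstractable_client => // v k G [_ [_ [HE _]]] e /HE.
Qed.

Record ProgAbs (G G' : PE) (R : Ev -> Ev -> Prop) : Prop := {
  pa_dom : forall e e', R e e' -> pE G e /\ pE G' e';
  pa_total : forall e, pE G e -> exists e', R e e';
  pa_functional : forall e e1 e2, R e e1 -> R e e2 -> e1 = e2;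
  pa_surjective : forall e', pE G' e' -> exists e, R e e';
  pa_client : forall e e', R e e' -> ~ LM e' -> e' = e;
  pa_impl : forall e e', R e e' -> LM e' -> ev_tid e' = ev_tid e /\
    sem (ev_tid e') (I (ev_tid e') (ev_meth e') (ev_args e')) (ev_out e') 0
        (restrictG G (fun x => R x e'));
  pa_po : forall x y x' y', ppo G x y -> R x x' -> R y y' -> x' = y' \/ ppo G' x' y';
  pa_po_reflect : forall x y x' y', R x x' -> R y y' -> ppo G' x' y' -> ppo G x y;
  pa_po_within : po_within G' }.

Lemma prog_abs_peq G H G' R : peq G H -> ProgAbs G G' R -> ProgAbs H G' R.
Proof.
  move=> [HE Hpo] [A1 A2 A3 A4 A5 A6 A7 A8 A9]; split; auto.
  - move=> e e' h; rewrite -HE; auto.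
  - move=> e h; apply A2; rewrite HE; auto.
  - move=> e e' h1 h2; have [? S] := A6 e e' h1 h2; split; [done|].
    apply: (sem_peq _ S); apply restrictG_peq; [split|]; auto; tauto.
  - move=> x y x' y' h; apply A7; apply Hpo; auto.
  - move=> *; apply Hpo; eauto.
Qed.

Lemma thread_abs_tid t n0 n1 G G' R e e' :
  ThreadAbs t n0 n1 G G' R -> (forall x, pE G x -> ev_tid x = t) ->
  R e e' -> ev_tid e = t /\ ev_tid e' = t.
Proof.
  move=> A Gt h; have Et := Gt _ (proj1 (ta_dom A h)); split; [done|].
  case: (classic (LM e')) => hL; [exact (proj1 (ta_impl A h hL))|by rewrite (ta_client A h hL)].
Qed.

Lemma prog_abs_par (Gs Gs' : Tid T -> PE) (Rs : Tid T -> Ev -> Ev -> Prop) (ns : Tid T -> nat) :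
  (forall t, ThreadAbs t 0 (ns t) (Gs t) (Gs' t) (Rs t)) ->
  (forall t e, pE (Gs t) e -> ev_tid e = t) ->
  (forall t, po_within (Gs t)) -> (forall t, po_within (Gs' t)) ->
  ProgAbs (parG Gs) (parG Gs') (fun e e' => exists t, Rs t e e').
Proof.
  move=> A Gt PGs PGs'.
  have Rt : forall t e e', Rs t e e' -> ev_tid e = t /\ ev_tid e' = t.
  { move=> t e e'; exact: thread_abs_tid (A t) (Gt t). }
  have same_thread : forall t t' e e', Rs t e e' -> pE (Gs t') e \/ pE (Gs' t') e' -> t' = t.
  { move=> t t' e e' h [h'|h'].
    - by rewrite -(Gt _ _ h') (proj1 (Rt _ _ _ h)).
    - have [x hx] := ta_surjective (A t') h'.
      by rewrite -(proj2 (Rt _ _ _ hx)) (proj2 (Rt _ _ _ h)). }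
  split=> /=.
  - move=> e e' [t h]; have [] := ta_dom (A t) h; eauto.
  - move=> e [t h]; have [] := ta_total (A t) h; eauto.
  - move=> e e1 e2 [t1 h1] [t2 h2].
    have Et : t2 = t1 by apply: (same_thread _ _ _ _ h1); left; exact (proj1 (ta_dom (A t2) h2)).
    subst t2; exact (ta_functional (A t1) h1 h2).
  - move=> e' [t h]; have [] := ta_surjective (A t) h; eauto.
  - move=> e e' [t h]; exact (ta_client (A t) h).
  - move=> e e' [t h] hL; have [Et [_ S]] := ta_impl (A t) h hL.
    rewrite Et (proj1 (Rt _ _ _ h)); split; [done|].
    apply: (sem_peq _ S); split=> /=.
    + move=> x; split; [eauto|move=> [t1 h1]].
      have E1 : t = t1 by apply: (same_thread _ _ _ _ h1); right; exact (proj2 (ta_dom (A t) h)).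
      by subst.
    + move=> x y; split; [move=> [hp [hx hy]]; split; [|split]; eauto|].
      move=> [[t1 hp] [[t2 hx] [t3 hy]]].
      have [px _] := PGs t1 x y hp.
      have E2 : t2 = t by apply: (same_thread _ _ _ _ h); right; exact (proj2 (ta_dom (A t2) hx)).
      subst t2; have E1 : t1 = t by apply: (same_thread _ _ _ _ hx); left.
      have E3 : t3 = t by apply: (same_thread _ _ _ _ h); right; exact (proj2 (ta_dom (A t3) hy)).
      by subst.
  - move=> x y x' y' [t hp] [t1 hx] [t2 hy]; have [px py] := PGs t x y hp.
    have E1 : t = t1 by apply: (same_thread _ _ _ _ hx); left.
    have E2 : t = t2 by apply: (same_thread _ _ _ _ hy); left.
    subst t1 t2; case: (ta_po (A t) hp hx hy); eauto.
  - move=> x y x' y' [t1 hx] [t2 hy] [t hp]; have [px py] := PGs' t x' y' hp.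
    have E1 : t = t1 by apply: (same_thread _ _ _ _ hx); right.
    have E2 : t = t2 by apply: (same_thread _ _ _ _ hy); right.
    subst t1 t2; exists t; exact (ta_po_reflect (A t) hx hy hp).
  - move=> x y [t hp]; have [] := PGs' t x y hp; split; [exists t|exists t]; done.
Qed.

Lemma prog_abs_tid G G' R e e' : ProgAbs G G' R -> R e e' -> ev_tid e' = ev_tid e.
Proof.
  move=> A h; case: (classic (LM e')) => hL.
  - exact (proj1 (pa_impl A h hL)).
  - by rewrite (pa_client A h hL).
Qed.

Lemma prog_abs_plain G G' R : is_plain G -> ProgAbs G G' R -> is_plain G'.
Proof.
  move=> [_ [Ptid [Pirr [Ptr Ptot]]]] A.
  have lift : forall x' y', ppo G' x' y' -> exists x y, R x x' /\ R y y' /\ ppo G x y.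
  { move=> x' y' h; have [hx hy] := pa_po_within A h.
    have [x rx] := pa_surjective A hx; have [y ry] := pa_surjective A hy.
    exists x, y; split; [done|split; [done|exact (pa_po_reflect A rx ry h)]]. }
  split; [exact (pa_po_within A)|split; [|split; [|split]]].
  - move=> x' y' h; have [x [y [rx [ry hp]]]] := lift _ _ h.
    rewrite (prog_abs_tid A rx) (prog_abs_tid A ry); exact: Ptid hp.
  - move=> x' h; have [x [y [rx [_ _]]]] := lift _ _ h.
    exact: Pirr x (pa_po_reflect A rx rx h).
  - move=> x' y' z' h1 h2; have [x [y [rx [ry hp]]]] := lift _ _ h1.
    have [_ hz] := pa_po_within A h2; have [z rz] := pa_surjective A hz.
    have hp2 := pa_po_reflect A ry rz h2.
    case: (pa_po A (Ptr _ _ _ hp hp2) rx rz) => [E|//]; subst z'.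
    exfalso; apply: (Pirr x); apply: (Ptr _ _ _ hp); exact (pa_po_reflect A ry rx h2).
  - move=> x' y' hx hy ht hne.
    have [x rx] := pa_surjective A hx; have [y ry] := pa_surjective A hy.
    have hxy : x <> y by move=> Exy; subst y; apply: hne; exact (pa_functional A rx ry).
    rewrite (prog_abs_tid A rx) (prog_abs_tid A ry) in ht.
    case: (Ptot _ _ (proj1 (pa_dom A rx)) (proj1 (pa_dom A ry)) ht hxy) => h.
    + case: (pa_po A h rx ry); tauto.
    + case: (pa_po A h ry rx) => [E|]; [exfalso; exact: hne|tauto].
Qed.

Lemma sem_conc_trans_abs (p : ConcProg Val Method T) vs (G : PE) :
  sem_conc (transC I L p) vs G -> exists G' R, sem_conc p vs G' /\ ProgAbs G G' R.
Proof.
  move=> [Gs [HS [_ HG]]].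
  have [F HF] : exists F : Tid T -> PE * (Ev -> Ev -> Prop) * nat, forall t,
      sem t (p t) (vs t) 0 (F t).1.1 /\ ThreadAbs t 0 (F t).2 (Gs t) (F t).1.1 (F t).1.2.
  { apply: (choice (fun t x => sem t (p t) (vs t) 0 x.1.1 /\
                                ThreadAbs t 0 x.2 (Gs t) x.1.1 x.1.2)) => t.
    have [G' [R [n1 [_ [S A]]]]] := abstractable_all 0 (HS t).
    by exists (G', R, n1). }
  have Gt : forall t e, pE (Gs t) e -> ev_tid e = t by move=> t; exact: sem_tid (HS t).
  exists (parG (fun t => (F t).1.1)), (fun e e' => exists t, (F t).1.2 e e'); split.
  - exists (fun t => (F t).1.1); split; [move=> t; exact: proj1 (HF t)|split; [|exact: peq_refl]].
    move=> t t' hne e h h'; apply: hne.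
    have [x hx] := ta_surjective (proj2 (HF t)) h; have [y hy] := ta_surjective (proj2 (HF t')) h'.
    by rewrite -(proj2 (thread_abs_tid (proj2 (HF t)) (Gt t) hx))
               -(proj2 (thread_abs_tid (proj2 (HF t')) (Gt t') hy)).
  - apply: (prog_abs_peq (peq_sym HG)); apply: (prog_abs_par (fun t => proj2 (HF t)) Gt).
    + move=> t; exact: sem_po_within (HS t).
    + move=> t; exact: sem_po_within (proj1 (HF t)).
Qed.

End Abstraction.

(** * Restricting executions *)

Lemma trans_rt_step_rt A (r : relation A) : (forall x y z, r x y -> r y z -> r x z) ->
  forall a b c d, clos_refl_trans A r a b -> r b c -> clos_refl_trans A r c d -> r a d.
Proof.
  move=> Htr a b c d ab bc cd.
  have r_rt : forall x y, clos_refl_trans A r x y -> forall w, r w x -> r w y.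
  { move=> x y; elim=> [u v uv|u|u v w _ IH1 _ IH2] w' h.
    - exact: Htr h uv.
    - done.
    - exact: IH2 _ (IH1 _ h). }
  have ad : clos_trans A r a d := clos_rt_t _ _ _ _ _ ab (t_step _ _ _ _ (r_rt _ _ cd _ bc)).
  elim: ad => [//|x y z _ xy _ yz]; exact: Htr xy yz.
Qed.

Section Restriction.
Context (Val Loc Method : Type) (T : nat) (Stamp : Type).
Notation PE := (PExec Val Method T).
Notation Ev := (Event Val Method T).
Notation Ex := (Exec Val Method T Stamp).

Lemma is_plain_restrictG (G : PE) (P : Ev -> Prop) :
  is_plain G -> is_plain (restrictG G (fun e => pE G e /\ P e)).
Proof.
  move=> [_ [Ptid [Pirr [Ptr Ptot]]]]; split; [|split; [|split; [|split]]]; simpl.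
  - by move=> x y [_ [? ?]].
  - move=> x y [h _]; exact: Ptid h.
  - move=> x [h _]; exact: Pirr h.
  - move=> x y z [h1 [? ?]] [h2 [? ?]]; split; [exact: Ptr h1 h2|tauto].
  - move=> x y hx hy ht hne; have := Ptot x y (proj1 hx) (proj1 hy) ht hne; tauto.
Qed.

Lemma restrict_restrict (X : Ex) (P Q : Ev -> Prop) :
  restrict (restrict X P) Q = restrict X (fun e => P e /\ Q e).
Proof.
  rewrite /restrict /=; f_equal;
    repeat (apply: functional_extensionality => ?); apply: propositional_extensionality; tauto.
Qed.

Lemma restrict_ext (X : Ex) (P Q : Ev -> Prop) :
  (forall e, xE X e -> (P e <-> Q e)) -> restrict X P = restrict X Q.
Proof.
  move=> PQ; rewrite /restrict /=; f_equal;
    repeat (apply: functional_extensionality => ?); apply: propositional_extensionality.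
  all: firstorder.
Qed.

Lemma clos_rt_restrict (X : Ex) (P : Ev -> Prop) x y :
  clos_refl_trans _ (xhb (restrict X P)) x y -> clos_refl_trans _ (xhb X) x y.
Proof.
  elim => [u v [h _]|u|u v w _ IH1 _ IH2]; [exact: rt_step|exact: rt_refl|exact: rt_trans IH1 IH2].
Qed.

Variable to : Stamp -> Stamp -> Prop.

Lemma restrict_hb (X : Ex) (P : Ev -> Prop) :
  incl_rel (clos_trans _ (union_rel (xppo to X) (xso X))) (xhb X) ->
  (forall x y z, xhb X x y -> xhb X y z -> xhb X x z) ->
  incl_rel (clos_trans _ (union_rel (xppo to (restrict X P)) (xso (restrict X P))))
           (xhb (restrict X P)).
Proof.
  move=> Hhb Htr x y; elim => [u v [[[hp [hu hv]] [su [sv ht]]]|[hs [hu hv]]]|u v w _ IH1 _ IH2].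
  - split; [|done]; apply: Hhb; apply: t_step; left.
    split; [done|split; [exact: (proj1 su)|split; [exact: (proj1 sv)|done]]].
  - split; [|done]; apply: Hhb; apply: t_step; right; done.
  - case: IH1 => h1 [? ?]; case: IH2 => h2 [? ?]; split; [exact: Htr h1 h2|done].
Qed.

Lemma consistent_restrict (Lam : LibSet Val Loc Method T Stamp) (X : Ex) (P : Ev -> Prop) :
  consistent to Lam X ->
  (forall L0, Lam L0 -> lC L0 (restrict (restrict X P) (fun e => lM L0 (ev_meth e)))) ->
  consistent to Lam (restrict X P).
Proof.
  move=> [[Hpl [[S1 S2] [So Hb]]] [Hhb [Hirr [Htr [Hm [Hso _]]]]]] HL.
  split; [|split; [exact: restrict_hb|split; [|split; [|split; [|split]]]]]; simpl.
  - split; [exact: is_plain_restrictG Hpl|split; [split|split]]; simpl.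
    + move=> e [he hP]; have [a ha] := S1 e he; by exists a.
    + by move=> e a [_ h].
    + move=> x y [h [[? ?] [? ?]]]; have [[? ?] [? ?]] := So x y h; by repeat split.
    + move=> x y [h [[? ?] [? ?]]]; have [[? ?] [? ?]] := Hb x y h; by repeat split.
  - move=> x [h _]; exact: Hirr h.
  - move=> x y z [h1 [? ?]] [h2 [? ?]]; split; [exact: Htr h1 h2|tauto].
  - move=> e [h _]; exact: Hm.
  - move=> x y [h _]; exact: Hso.
  - exact: HL.
Qed.

Lemma lib_restrict_separated (L0 : Library Val Loc Method T Stamp) (X : Ex) (P : Ev -> Prop) :
  is_library to L0 -> lC L0 (restrict X (fun e => lM L0 (ev_meth e))) ->
  (forall l, locSetL L0 (fun e => xE X e /\ P e) l ->
             locSetL L0 (fun e => xE X e /\ ~ P e) l -> False) ->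
  lC L0 (restrict X (fun e => lM L0 (ev_meth e) /\ P e)).
Proof.
  move=> [_ Hdec] HX Hloc.
  have HP : lC L0 (restrict (restrict X (fun e => lM L0 (ev_meth e)))
                            (fun e => (xE X e /\ lM L0 (ev_meth e)) /\ P e)).
  { apply: (Hdec _ _ (fun e => (xE X e /\ lM L0 (ev_meth e)) /\ ~ P e) HX) => /=.
    - move=> e; case: (classic (P e)); tauto.
    - by move=> e [_ ?] [_ ?].
    - move=> l [e [[[? ?] ?] ?]] [e' [[[? ?] ?] ?]]; apply: (Hloc l); [exists e|exists e']; auto. }
  rewrite restrict_restrict in HP; erewrite restrict_ext; [exact: HP|move=> e /=; tauto].
Qed.

End Restriction.

(** * Soundness *)

Section Soundness.
Context (Val Loc Method : Type) (T : nat) (Stamp : Type) (to : Stamp -> Stamp -> Prop).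
Context (Lam : LibSet Val Loc Method T Stamp) (L : Library Val Loc Method T Stamp)
        (I : Impl Val Method T).
Notation PE := (PExec Val Method T).
Notation Ev := (Event Val Method T).
Notation SE := (SEv Val Method T Stamp).
Notation LM e := (lM L (ev_meth e)).

Hypothesis Lam_libraries : forall L', Lam L' -> is_library to L'.
Hypothesis L_compatible : forall L', Lam L' -> compatible L L'.
Hypothesis impl_calls : forall t m vs, lM L m -> calls_only (methods_of Lam) (I t m vs).

Variables (p : ConcProg Val Method T) (vs : Tid T -> Val).
Hypothesis loc_separated : forall l, locImpl I L Lam l -> locProg (add_lib Lam L) p l -> False.

Variables (X : Exec Val Method T Stamp) (G' : PE) (R : Ev -> Ev -> Prop).
Hypothesis X_consistent : consistent to Lam X.
Hypothesis G'_sem : sem_conc p vs G'.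
Hypothesis X_abs : ProgAbs L I (xplain X) G' R.

Definition impl_event (e : Ev) : Prop := exists e', R e e' /\ LM e'.

Lemma impl_event_not_L e e' : R e e' -> LM e' -> ~ LM e.
Proof.
  move=> h hL hL'; have [_ S] := pa_impl X_abs h hL.
  have [_ [L1 [HL1 hm]]] := sem_events (impl_calls _ _ hL) S (e := e) h.
  exact: L_compatible HL1 _ hL' hm.
Qed.

Lemma X_events_not_L e : xE X e -> ~ LM e.
Proof.
  move=> he; have [e' h] := pa_total X_abs he.
  case: (classic (LM e')) => hL; [exact: impl_event_not_L h hL|by rewrite -(pa_client X_abs h hL)].
Qed.

Lemma client_in_X e : pE G' e -> ~ LM e -> xE X e /\ R e e.
Proof.
  move=> he hL; have [e0 h0] := pa_surjective X_abs he.
  have E0 := pa_client X_abs h0 hL; subst e0; split; [exact (proj1 (pa_dom X_abs h0))|done].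
Qed.

Lemma non_impl_client e : xE X e -> ~ impl_event e -> pE G' e /\ ~ LM e.
Proof.
  move=> he hi; have [e' h] := pa_total X_abs he.
  case: (classic (LM e')) => hL; [by case: hi; exists e'|].
  have E0 := pa_client X_abs h hL; subst e'; split; [exact (proj2 (pa_dom X_abs h))|done].
Qed.

Lemma impl_client_loc_disjoint L0 l : Lam L0 ->
  locSetL L0 (fun e => xE X e /\ impl_event e) l ->
  locSetL L0 (fun e => xE X e /\ ~ impl_event e) l -> False.
Proof.
  move=> HL0 [e [[he [e' [h hL]]] hl]] [e2 [[he2 hi2] hl2]]; apply: (loc_separated (l := l)).
  - have [_ S] := pa_impl X_abs h hL.
    exists (ev_tid e'), (ev_meth e'), (ev_args e'), (ev_out e'), 0,
      (restrictG (xplain X) (fun x => R x e')), e.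
    do 3 (split; [done|]); by exists L0.
  - exists vs, G', e2; split; [done|split; [exact: proj1 (non_impl_client he2 hi2)|]].
    by exists L0; split; [left|].
Qed.

Lemma lib_impl_part L0 : Lam L0 ->
  lC L0 (restrict X (fun e => lM L0 (ev_meth e) /\ impl_event e)).
Proof.
  have [_ [_ [_ [_ [_ [_ Xlib]]]]]] := X_consistent.
  move=> HL0; apply: lib_restrict_separated; [exact: Lam_libraries|exact: Xlib|].
  move=> l; exact: impl_client_loc_disjoint HL0.
Qed.

Lemma lib_client_part L0 : Lam L0 ->
  lC L0 (restrict X (fun e => lM L0 (ev_meth e) /\ ~ impl_event e)).
Proof.
  have [_ [_ [_ [_ [_ [_ Xlib]]]]]] := X_consistent.
  move=> HL0; apply: lib_restrict_separated; [exact: Lam_libraries|exact: Xlib|].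
  move=> l Hc [e [[he hi] hl]]; apply: (impl_client_loc_disjoint HL0 _ Hc).
  by exists e; split; [split; [|exact: NNPP]|].
Qed.

Lemma impl_consistent : consistent to Lam (restrict X impl_event).
Proof.
  apply: (consistent_restrict X_consistent) => L0 HL0; rewrite restrict_restrict.
  rewrite (@restrict_ext _ _ _ _ _ _ (fun e => lM L0 (ev_meth e) /\ impl_event e)); last tauto.
  exact: lib_impl_part.
Qed.

Lemma abs_function_exists : exists f, forall e, xE X e -> R e (f e).
Proof.
  apply: (choice (fun e e' => xE X e -> R e e')) => e.
  case: (classic (xE X e)) => he; [have [e' ?] := pa_total X_abs he; by exists e'|by exists e].
Qed.

Definition client (e : Ev) : Prop := pE G' e /\ ~ LM e.

Lemma Lam_method_not_L L0 (e : Ev) : Lam L0 -> lM L0 (ev_meth e) -> ~ LM e.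
Proof. move=> HL0 h1 h2; exact: L_compatible HL0 _ h2 h1. Qed.

Lemma client_L0_iff L0 (e : Ev) : Lam L0 ->
  (pE G' e /\ lM L0 (ev_meth e)) <-> (xE X e /\ (lM L0 (ev_meth e) /\ ~ impl_event e)).
Proof.
  move=> HL0; split.
  - move=> [he hm]; have nL := Lam_method_not_L HL0 hm; have [xe re] := client_in_X he nL.
    split; [done|split; [done|move=> [e1 [h1 hL]]]].
    by apply: nL; rewrite (pa_functional X_abs re h1).
  - move=> [xe [hm hi]]; split; [exact: proj1 (non_impl_client xe hi)|done].
Qed.

Lemma client_po_iff x y : client x -> client y -> (ppo G' x y <-> xpo X x y).
Proof.
  have [[[_ [_ [Xirr _]]] _] _] := X_consistent.
  move=> [hx nx] [hy ny]; have [_ rx] := client_in_X hx nx; have [_ ry] := client_in_X hy ny.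
  split; [exact (pa_po_reflect X_abs rx ry)|move=> hp].
  case: (pa_po X_abs hp rx ry) => // E; subst; by case: (Xirr _ hp).
Qed.

Section MergedExecution.
Variable f : Ev -> Ev.
Hypothesis f_spec : forall e, xE X e -> R e (f e).

Lemma f_of_R e e' : R e e' -> f e = e'.
Proof.
  move=> h; apply: (pa_functional X_abs _ h); apply: f_spec; exact (proj1 (pa_dom X_abs h)).
Qed.

Lemma impl_abstracts :
  abstracts I L (xplain (restrict X impl_event)) (restrictG G' (fun e => pE G' e /\ LM e)) f.
Proof.
  have impl_L : forall e, xE X e -> impl_event e -> pE G' (f e) /\ LM (f e).
  { move=> e he [e' [h hL]]; rewrite (f_of_R h); split; [exact (proj2 (pa_dom X_abs h))|done]. }
  split; [|split; [|split; [|split; [|split; [|split]]]]]; simpl.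
  - move=> e [he hi]; exact: impl_L.
  - move=> e' [he' hL]; have [e h] := pa_surjective X_abs he'; exists e.
    split; [split; [exact (proj1 (pa_dom X_abs h))|by exists e']|exact: f_of_R].
  - move=> e [he _]; exact: X_events_not_L.
  - by move=> e' [_ hL].
  - move=> e1 e2 [hp [[h1 i1] [h2 i2]]].
    case: (pa_po X_abs hp (f_spec h1) (f_spec h2)) => [->|E]; [exact: rt_refl|].
    by apply: rt_step; split; [|split; apply: impl_L].
  - move=> e1 e2 [h1 i1] [h2 i2] [hp _].
    split; [exact (pa_po_reflect X_abs (f_spec h1) (f_spec h2) hp)|done].
  - move=> e' [he' hL]; have [e0 h0] := pa_surjective X_abs he'; have [_ S] := pa_impl X_abs h0 hL.
    have Aiff : forall x, R x e' <-> (xE X x /\ impl_event x) /\ f x = e'.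
    { move=> x; split.
      - move=> h; split; [split; [exact (proj1 (pa_dom X_abs h))|by exists e']|exact: f_of_R].
      - by move=> [[hx _] <-]; apply: f_spec. }
    apply: (sem_peq _ S); split=> [x|x y] /=; [exact: Aiff|].
    have := Aiff x; have := Aiff y; tauto.
Qed.

Let Xi := restrict X impl_event.
Let EL (e : Ev) : Prop := pE G' e /\ LM e.

Variables (stmp' : Ev -> Stamp -> Prop) (so' : SE -> SE -> Prop) (g : SE -> SE).
Hypothesis stmp'_stmp : is_stmp EL stmp'.
Hypothesis so'_sub : forall x y, so' x y -> subev EL stmp' x /\ subev EL stmp' y.
Hypothesis g_sub : forall x, subev EL stmp' x -> xSE Xi (g x).
Hypothesis g_anchors : forall e' a' e a, subev EL stmp' (e', a') -> g (e', a') = (e, a) ->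
  f e = e' /\
  (forall a0, to a0 a' -> exists e1 a1, xSE Xi (e1, a1) /\ f e1 = e' /\ to a0 a1 /\
                                        clos_refl_trans _ (xhb Xi) (e1, a1) (e, a)) /\
  (forall a0, to a' a0 -> exists e2 a2, xSE Xi (e2, a2) /\ f e2 = e' /\ to a2 a0 /\
                                        clos_refl_trans _ (xhb Xi) (e, a) (e2, a2)).
Hypothesis g_so' : forall x y, so' x y -> xhb Xi (g x) (g y).
Hypothesis L_exec : forall hb' : SE -> SE -> Prop,
  (forall x y, hb' x y -> subev EL stmp' x /\ subev EL stmp' y) ->
  (forall x y z, hb' x y -> hb' y z -> hb' x z) ->
  incl_rel (clos_trans _ (union_rel (ppo_of to (ppo (restrictG G' EL)) stmp') so')) hb' ->
  (forall x y, hb' x y -> xhb Xi (g x) (g y)) ->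
  lC L (mkExec EL (ppo (restrictG G' EL)) stmp' so' hb').

Definition merged_stmp (e : Ev) (a : Stamp) : Prop :=
  pE G' e /\ (LM e /\ stmp' e a \/ ~ LM e /\ xstmp X e a).

Definition merged_so (x y : SE) : Prop :=
  so' x y \/ (xso X x y /\ client (fst x) /\ client (fst y)).

Definition hb_image (x : SE) : SE :=
  if excluded_middle_informative (LM (fst x)) then g x else x.

Definition merged_hb (x y : SE) : Prop :=
  subev (pE G') merged_stmp x /\ subev (pE G') merged_stmp y /\ xhb X (hb_image x) (hb_image y).

Definition merged_exec : Exec Val Method T Stamp :=
  mkExec (pE G') (ppo G') merged_stmp merged_so merged_hb.

Lemma hb_image_L x : LM (fst x) -> hb_image x = g x.
Proof. by rewrite /hb_image; case: excluded_middle_informative. Qed.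

Lemma hb_image_client x : ~ LM (fst x) -> hb_image x = x.
Proof. by rewrite /hb_image; case: excluded_middle_informative. Qed.

Lemma anchor_after e1 a1 a0 : subev (pE G') merged_stmp (e1, a1) -> to a1 a0 ->
  exists e2 a2, (xE X e2 /\ xstmp X e2 a2) /\ R e2 e1 /\ to a2 a0 /\
                clos_refl_trans _ (xhb X) (hb_image (e1, a1)) (e2, a2).
Proof.
  move=> [he1 [_ [[hL s1]|[hL s1]]]] ht /=.
  - rewrite hb_image_L //; case Eg: (g (e1, a1)) => [e a].
    have [_ [_ after]] := g_anchors (conj (conj he1 hL) s1) Eg.
    have [e2 [a2 [[[xe2 _] [xs2 _]] [fe2 [ht2 rt2]]]]] := after a0 ht.
    exists e2, a2; split; [done|split; [rewrite -fe2; exact: f_spec|split; [done|]]].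
    exact: clos_rt_restrict rt2.
  - rewrite hb_image_client //; have [xe1 r1] := client_in_X he1 hL.
    by exists e1, a1; split; [|split; [|split; [|exact: rt_refl]]].
Qed.

Lemma anchor_before e1 a1 a0 : subev (pE G') merged_stmp (e1, a1) -> to a0 a1 ->
  exists e2 a2, (xE X e2 /\ xstmp X e2 a2) /\ R e2 e1 /\ to a0 a2 /\
                clos_refl_trans _ (xhb X) (e2, a2) (hb_image (e1, a1)).
Proof.
  move=> [he1 [_ [[hL s1]|[hL s1]]]] ht /=.
  - rewrite hb_image_L //; case Eg: (g (e1, a1)) => [e a].
    have [_ [before _]] := g_anchors (conj (conj he1 hL) s1) Eg.
    have [e2 [a2 [[[xe2 _] [xs2 _]] [fe2 [ht2 rt2]]]]] := before a0 ht.
    exists e2, a2; split; [done|split; [rewrite -fe2; exact: f_spec|split; [done|]]].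
    exact: clos_rt_restrict rt2.
  - rewrite hb_image_client //; have [xe1 r1] := client_in_X he1 hL.
    by exists e1, a1; split; [|split; [|split; [|exact: rt_refl]]].
Qed.

Lemma ppo_merged_hb x y :
  ppo_of to (ppo G') merged_stmp x y -> xhb X (hb_image x) (hb_image y).
Proof.
  have [_ [Xhb [_ [Xtr _]]]] := X_consistent.
  move: x y => [e1 a1] [e2 a2] [hp [s1 [s2 ht]]] /=.
  have [he1 he2] := pa_po_within X_abs hp.
  have [e3 [a3 [[xe3 xs3] [r3 [ht3 rt3]]]]] := anchor_after (conj he1 s1) ht.
  have [e4 [a4 [[xe4 xs4] [r4 [ht4 rt4]]]]] := anchor_before (conj he2 s2) ht3.
  apply: (trans_rt_step_rt Xtr rt3 _ rt4); apply: Xhb; apply: t_step; left.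
  split; [exact (pa_po_reflect X_abs r3 r4 hp)|by split; [|split]].
Qed.

Lemma merged_so_sub x y : merged_so x y ->
  subev (pE G') merged_stmp x /\ subev (pE G') merged_stmp y.
Proof.
  have [[_ [_ [Xso _]]] _] := X_consistent.
  move=> [hs|[hs [[cx nx] [cy ny]]]].
  - have [[[ex Lx] sx] [[ey Ly] sy]] := so'_sub hs.
    by split; split; [|split; [|left]| |split; [|left]].
  - have [[_ sx] [_ sy]] := Xso x y hs.
    by split; split; [|split; [|right]| |split; [|right]].
Qed.

Lemma so_merged_hb x y : merged_so x y -> xhb X (hb_image x) (hb_image y).
Proof.
  have [_ [Xhb _]] := X_consistent.
  move=> [hs|[hs [[_ nx] [_ ny]]]].
  - have [[[_ Lx] _] [[_ Ly] _]] := so'_sub hs.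
    rewrite hb_image_L // hb_image_L //; exact: proj1 (g_so' hs).
  - rewrite hb_image_client // hb_image_client //; apply: Xhb; apply: t_step; by right.
Qed.

Lemma merged_hb_trans x y z : merged_hb x y -> merged_hb y z -> merged_hb x z.
Proof.
  have [_ [_ [_ [Xtr _]]]] := X_consistent.
  move=> [? [? h1]] [? [? h2]]; split; [done|split; [done|exact: Xtr h1 h2]].
Qed.

Lemma merged_hb_closure :
  incl_rel (clos_trans _ (union_rel (ppo_of to (ppo G') merged_stmp) merged_so)) merged_hb.
Proof.
  move=> x y; elim=> [u v [hp|hs]|u v w _ h1 _ h2]; last exact: merged_hb_trans h1 h2.
  - move: (hp) => [hpo [su [sv _]]]; have [hu hv] := pa_po_within X_abs hpo.
    split; [by split|split; [by split|exact: ppo_merged_hb]].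
  - have [? ?] := merged_so_sub hs; split; [done|split; [done|exact: so_merged_hb]].
Qed.

Lemma merged_is_exec : is_exec merged_exec.
Proof.
  have [[Xplain [[Xstmp _] _]] _] := X_consistent.
  split; [exact: prog_abs_plain Xplain X_abs|split; [split|split]].
  - move=> e he /=; case: (classic (LM e)) => hL.
    + have [a ha] := proj1 stmp'_stmp e (conj he hL); by exists a; split; [|left].
    + have [a ha] := Xstmp e (proj1 (client_in_X he hL)); by exists a; split; [|right].
  - by move=> e a [].
  - exact: merged_so_sub.
  - by move=> x y [? [? _]].
Qed.

Lemma merged_stmp_L e a : merged_stmp e a -> LM e -> stmp' e a.
Proof. by move=> [_ [[_ s]|[nL _]]] hL; [|case: nL]. Qed.

Lemma merged_lib_L : lC L (restrict merged_exec (fun e => LM e)).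
Proof.
  set hbL := xhb (restrict merged_exec (fun e => LM e)).
  have Hcl := restrict_hb (X := merged_exec) (P := fun e => LM e) merged_hb_closure merged_hb_trans.
  have Eq : restrict merged_exec (fun e => LM e) =
            mkExec EL (ppo (restrictG G' EL)) stmp' so' hbL.
  { rewrite /restrict /=; f_equal;
      repeat (apply: functional_extensionality => ?); apply: propositional_extensionality.
    - split; [move=> [[_ [[_ s]|[nL _]]] [_ hL]]; [done|by case: nL]|move=> s].
      have [? ?] := proj2 stmp'_stmp _ _ s; split; [split; [|left]|]; done.
    - split; [move=> [[hs|[_ [[_ ?] _]]] [[_ ?] _]] //|move=> hs].
      have [[? _] [? _]] := so'_sub hs; by split; [left|]. }
  rewrite Eq in Hcl; rewrite Eq; apply: L_exec.
  - move=> x y [[[_ sx] [[_ sy] _]] [ex ey]].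
    split; split; [done|exact: merged_stmp_L sx (proj2 ex)|done|exact: merged_stmp_L sy (proj2 ey)].
  - move=> x y z [h1 [? _]] [h2 [_ ?]]; split; [exact: merged_hb_trans h1 h2|done].
  - exact: Hcl.
  - move=> x y [[[ex sx] [[ey sy] hb]] [[_ Lx] [_ Ly]]].
    split; [by rewrite -(hb_image_L Lx) -(hb_image_L Ly)|split].
    + exact: proj1 (g_sub (conj (conj ex Lx) (merged_stmp_L sx Lx))).
    + exact: proj1 (g_sub (conj (conj ey Ly) (merged_stmp_L sy Ly))).
Qed.

Lemma restrict_merged_Lam L0 : Lam L0 ->
  let Y := restrict X (fun e => lM L0 (ev_meth e) /\ ~ impl_event e) in
  restrict merged_exec (fun e => lM L0 (ev_meth e)) =
  mkExec (xE Y) (xpo Y) (xstmp Y) (xso Y) (xhb (restrict merged_exec (fun e => lM L0 (ev_meth e)))).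
Proof.
  move=> HL0 Y; have cl : forall e, pE G' e /\ lM L0 (ev_meth e) -> client e.
  { by move=> e [he hm]; split; [|exact: Lam_method_not_L HL0 hm]. }
  have iff : forall e, _ := fun e => client_L0_iff e HL0.
  rewrite /restrict /=; f_equal;
    repeat (apply: functional_extensionality => ?); apply: propositional_extensionality.
  - exact: iff.
  - split; move=> [hp [hx hy]].
    + split; [exact/(client_po_iff (cl _ hx) (cl _ hy))|split; exact/iff].
    + have hx' := proj2 (iff _) hx; have hy' := proj2 (iff _) hy.
      split; [exact/(client_po_iff (cl _ hx') (cl _ hy'))|done].
  - split.
    + move=> [[_ [[hL _]|[_ s]]] he]; [by case: (proj2 (cl _ he))|split; [done|exact/iff]].
    + move=> [s he]; have he' := proj2 (iff _) he.
      by split; [split; [exact: proj1 he'|right; split; [exact: proj2 (cl _ he')|]]|].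
  - split.
    + move=> [[hs|[hs _]] [hx hy]]; last by split; [|split; exact/iff].
      by have [[[_ ?] _] _] := so'_sub hs; case: (proj2 (cl _ hx)).
    + move=> [hs [hx hy]]; have hx' := proj2 (iff _) hx; have hy' := proj2 (iff _) hy.
      by split; [right; split; [|split; apply: cl]|].
Qed.

Lemma merged_lib_Lam L0 : Lam L0 -> lC L0 (restrict merged_exec (fun e => lM L0 (ev_meth e))).
Proof.
  move=> HL0; have Eq := restrict_merged_Lam HL0.
  have Hcl := restrict_hb (X := merged_exec) (P := fun e => lM L0 (ev_meth e))
                          merged_hb_closure merged_hb_trans.
  rewrite Eq in Hcl; rewrite Eq; apply: (proj1 (Lam_libraries HL0) _ _ (lib_client_part HL0) Hcl).
  move=> x y [[_ [_ hb]] [hx hy]].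
  have nx := Lam_method_not_L HL0 (proj2 hx); have ny := Lam_method_not_L HL0 (proj2 hy).
  rewrite hb_image_client // hb_image_client // in hb.
  by split; [|split; apply/(client_L0_iff _ HL0)].
Qed.

Lemma merged_consistent : consistent to (add_lib Lam L) merged_exec.
Proof.
  have [_ [_ [Xirr [_ [Xmeth [Xso _]]]]]] := X_consistent.
  split; [exact: merged_is_exec|split; [exact: merged_hb_closure|]].
  split; [by move=> x [_ [_ /Xirr]]|split; [exact: merged_hb_trans|split; [|split]]].
  - move=> e he /=; case: (classic (LM e)) => hL; [by exists L; split; [right|]|].
    have [L1 [HL1 hm]] := Xmeth e (proj1 (client_in_X he hL)); by exists L1; split; [left|].
  - move=> x y [hs|[hs _]].
    + have [[[_ ?] _] [[_ ?] _]] := so'_sub hs; by exists L; split; [right|].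
    + have [L1 [HL1 hm]] := Xso x y hs; by exists L1; split; [left|].
  - move=> L0 [HL0|->]; [exact: merged_lib_Lam|exact: merged_lib_L].
Qed.

End MergedExecution.

Lemma outcome_of_abstraction : locally_sound to I L Lam -> outcome to (add_lib Lam L) p vs.
Proof.
  move=> Hls; have [f f_spec] := abs_function_exists.
  have [[Xplain _] _] := X_consistent.
  have [stmp' [so' [g [Hst [Hso [Hg [Hi [Hii Hiii]]]]]]]] :=
    Hls _ _ f impl_consistent (is_plain_restrictG (fun e => LM e) (prog_abs_plain Xplain X_abs))
        (impl_abstracts f_spec).
  eexists; split; [exact: (merged_consistent f_spec Hst Hso Hg Hi Hii Hiii)|exact: G'_sem].
Qed.

End Soundness.

Theorem mainTheorem2 (Val Loc Method : Type) (T : nat) (Stamp : Type)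
    (to : Stamp -> Stamp -> Prop)
    (Lam : LibSet Val Loc Method T Stamp) (L : Library Val Loc Method T Stamp)
    (I : Impl Val Method T) :
  (forall L', Lam L' -> is_library to L') ->
  is_library to L ->
  pairwise_compatible Lam ->
  (forall L', Lam L' -> compatible L L') ->
  ~ Lam L ->
  well_defined I L Lam ->
  locally_sound to I L Lam ->
  sound to I L Lam.
Proof.
  move=> Lam_libs _ _ L_compat _ [_ WD] Hls p _ Hloc vs [X [HX HS]].
  have [G' [R [HS' X_abs]]] := sem_conc_trans_abs
    (fun t m vs v k G hm => proj1 (proj2 (WD t m vs hm)) v k G)
    (fun t m vs v G hm => proj2 (proj2 (WD t m vs hm)) v G) HS.
  exact: (outcome_of_abstraction Lam_libs L_compat (fun t m vs hm => proj1 (WD t m vs hm))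
                                  Hloc HX HS' X_abs Hls).
Qed.
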